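(* Let $1\le j\le d$, let $\bm{x}_1,\dots,\bm{x}_{j+1}\in\mathbb{R}^d$ be affinely independent, let $\rho\in\mathbb{R}$, let $\bm{k}\in\mathbb{R}^d$, and set $\sigma_t=\bm{k}\cdot\bm{x}_t$, assumed pairwise distinct. Define $$S_t=\frac{e^{-i\sigma_t}}{\prod_{l=1,\,l\neq t}^{j+1}(\sigma_t-\sigma_l)},\qquad S=\sum_{t=1}^{j+1}S_t,$$ let $\hat B$ be the $(j+2)\times(j+2)$ Cayley–Menger matrix whose first row and first column are $(0,1,\dots,1)$ and whose entry in row $s+1$, column $t+1$ is $\|\bm{x}_s-\bm{x}_t\|^2$ ($1\le s,t\le j+1$), let $\gamma=\sqrt{(-1)^{j+1}\det(\hat B)/2^j}$ (equivalently $\gamma=j!$ times the $j$-dimensional content of the simplex), and let $$F(\bm{k})=\rho\, i^j\,\gamma\, S .$$ Then for each $p\in\{1,\dots,j+1\}$, $$\frac{\partial F(\bm{k})}{\partial \bm{x}_p}=\rho\, i^j\left(\Lambda\,\bm{k}+\Gamma\sum_{\substack{m=1\\ m\neq p}}^{j+1}A_{pm}\bm{D}_{pm}\right),$$ where $\bm{D}_{pm}=2(\bm{x}_p-\bm{x}_m)$, $A_{pm}$ is the entry of $\mathrm{adj}(\hat B)$ in the $p$-th row and $m$-th column when rows and columns are indexed starting from $0$ (i.e. the $(p+1)$-th row and $(m+1)$-th column in $1$-based indexing), $$\Lambda=\gamma\left(-i\,S_p+\sum_{t=1,\,t\neq p}^{j+1}\frac{S_t+S_p}{\sigma_t-\sigma_p}\right),\qquad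 \Gamma=\frac{(-1)^{j+1}/2^j}{\gamma}\,S .$$
   Context: $i$ is the imaginary unit. $F(\bm{k})$ is the non-uniform Fourier transform, at frequency $\bm{k}$, of the piecewise-constant function equal to $\rho$ on the $j$-simplex $\mathrm{conv}\{\bm{x}_1,\dots,\bm{x}_{j+1}\}$ and $0$ elsewhere; $\gamma$ is the content distortion factor (ratio of the simplex content to the content $1/j!$ of the unit orthogonal simplex). Derivatives with respect to $\bm{x}_p\in\mathbb{R}^d$ are gradient vectors in $\mathbb{C}^d$. *)

From HB Require Import structures.
From mathcomp Require Import all_boot all_order all_algebra.
From mathcomp Require Import all_classical all_reals all_analysis.
From mathcomp Require Import complex.
Set Implicit Arguments. Unset Strict Implicit. Unset Printing Implicit Defensive.
Import Order.TTheory GRing.Theory Num.Theory.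
Import numFieldNormedType.Exports.
Local Open Scope ring_scope.

Section SimplexFT.
Variables (R : realType) (d j : nat).

(* points x_1..x_{j+1} are indexed by 'I_j.+1 (0-based); vectors of R^d are row vectors *)
Definition dotv (u v : 'rV[R]_d) : R := \sum_(c < d) u 0 c * v 0 c.
Definition sqdist (u v : 'rV[R]_d) : R := \sum_(c < d) (u 0 c - v 0 c) ^+ 2.

Definition affinely_independent (x : 'I_j.+1 -> 'rV[R]_d) : bool :=
  row_free (\matrix_(t < j, c < d) (x (lift ord0 t) 0 c - x ord0 0 c)).

Definition CMmx (x : 'I_j.+1 -> 'rV[R]_d) : 'M[R]_(j.+2) :=
  \matrix_(a, b)
    match unlift ord0 a, unlift ord0 b with
    | Some s, Some t => sqdist (x s) (x t)
    | None, None => 0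
    | _, _ => 1
    end.

Definition sigma (k : 'rV[R]_d) (x : 'I_j.+1 -> 'rV[R]_d) (t : 'I_j.+1) : R :=
  dotv k (x t).

Definition cexpi (th : R) : R[i] := Complex (cos th) (sin th).

Definition S_t k x (t : 'I_j.+1) : R[i] :=
  cexpi (- sigma k x t) /
  (real_complex R (\prod_(l < j.+1 | l != t) (sigma k x t - sigma k x l))).

Definition S_sum k x : R[i] := \sum_(t < j.+1) S_t k x t.

Definition gammaCM x : R :=
  Num.sqrt ((-1) ^+ j.+1 * \det (CMmx x) / 2 ^+ j).

Definition Fhat (rho : R) k x : R[i] :=
  real_complex R rho * (Complex 0 1) ^+ j * real_complex R (gammaCM x) * S_sum k x.

Definition Lambda k x (p : 'I_j.+1) : R[i] :=
  real_complex R (gammaCM x) *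
  (- Complex 0 1 * S_t k x p +
   \sum_(t < j.+1 | t != p)
      (S_t k x t + S_t k x p) / real_complex R (sigma k x t - sigma k x p)).

Definition GammaCM k x : R[i] :=
  real_complex R ((-1) ^+ j.+1 / 2 ^+ j / gammaCM x) * S_sum k x.

(* A_{pm}: entry of adj(\hat B) at 0-based row p, column m (p, m in 1..j+1) *)
Definition Aadj x (p m : 'I_j.+1) : R := \adj (CMmx x) (lift ord0 p) (lift ord0 m).

Definition grad_rhs (rho : R) k x (p : 'I_j.+1) (c : 'I_d) : R[i] :=
  real_complex R rho * (Complex 0 1) ^+ j *
  (Lambda k x p * real_complex R (k 0 c) +
   GammaCM k x *
   real_complex R (\sum_(m < j.+1 | m != p) Aadj x p m * (2 * (x p 0 c - x m 0 c)))).

Definition xpert (x : 'I_j.+1 -> 'rV[R]_d) (p : 'I_j.+1) (c : 'I_d) (h : R)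
  : 'I_j.+1 -> 'rV[R]_d :=
  fun t => if t == p then x t + h *: delta_mx 0 c else x t.

Definition cplx_derive (f : R -> R[i]) (a : R) (l : R[i]) : Prop :=
  is_derive a 1 (fun h => complex.Re (f h)) (complex.Re l) /\
  is_derive a 1 (fun h => complex.Im (f h)) (complex.Im l).

End SimplexFT.

From mathcomp Require Import all_boot all_order all_algebra.
From mathcomp Require Import all_classical all_reals all_analysis.
From mathcomp Require Import complex.
From mathcomp Require Import perm ring.

(* F = rho i^j gamma S, so the gradient splits by the product rule into a term
   from S and a term from gamma. Moving x_p along the coordinate c moves only
   sigma_p, with speed k_c; each S_t is e^{-i sigma_t} divided by a product of
   differences of the sigma's, whose derivative is computed logarithmically, and
   summing over t gives Lambda k_c.
   gamma is the square root of (-1)^{j+1} det(B)/2^j. By Jacobi's formula only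
   the row and column of x_p in the Cayley-Menger matrix B contribute, and since B is
   symmetric both contributions are sum_m A_pm (D_pm)_c; the chain rule through
   the square root then gives Gamma sum_m A_pm (D_pm)_c. The square root is
   differentiable because det B <> 0: a kernel vector (z, w) of B satisfies
   sum_t w_t = 0, hence sum_{s,t} w_s w_t |x_s - x_t|^2 = -2 |sum_t w_t x_t|^2,
   while the other rows of B make the left-hand side vanish; so
   sum_t w_t x_t = 0, an affine dependence. *)

Set Implicit Arguments. Unset Strict Implicit. Unset Printing Implicit Defensive.
Import Order.TTheory GRing.Theory Num.Theory.
Import numFieldNormedType.Exports.
Local Open Scope ring_scope.
Local Open Scope complex_scope.

Section RealDerive.
Variable R : realType.
Implicit Types (a df : R) (f : R -> R).

Lemma is_derive_big_sum (I : Type) (r : seq I) (P : pred I)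
    (F : I -> R -> R) (L : I -> R) a :
  (forall i, P i -> is_derive a 1 (F i) (L i)) ->
  is_derive a 1 (fun h => \sum_(i <- r | P i) F i h) (\sum_(i <- r | P i) L i).
Proof.
move=> dF; rewrite -fct_sumE.
elim/big_rec2: _ => [|i dg g Pi dg_g]; first exact: is_derive_cst.
exact: is_deriveD (dF i Pi) dg_g.
Qed.

Lemma is_derive_prod n (F : 'I_n -> R -> R) (L : 'I_n -> R) a :
  (forall i, is_derive a 1 (F i) (L i)) ->
  is_derive a 1 (fun h => \prod_(i < n) F i h)
    (\sum_(i < n) L i * \prod_(k < n | k != i) F k a).
Proof.
elim: n F L => [|n IHn] F L dF.
  by rewrite big_ord0 -fct_prodE big_ord0; exact: is_derive_cst.
have dP := is_deriveM (dF ord0) (IHn _ _ (fun i => dF (lift ord0 i))).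
rewrite -fct_prodE big_ord_recl fct_prodE.
apply: (is_derive_eq dP); rewrite big_ord_recl addrC /GRing.scale /=; congr (_ + _).
- rewrite mulrC [in RHS]big_mkcond big_ord_recl /= mul1r.
  by congr (_ * _); apply: eq_bigr => k _.
- rewrite big_distrr; apply: eq_bigr => i _ /=.
  rewrite [in RHS]big_mkcond big_ord_recl /= [in RHS]big_mkcond /=.
  by rewrite mulrCA big_mkcond; congr (_ * (_ * _)); apply: eq_bigr.
Qed.

Lemma is_derive_prod_nonzero n (P : pred 'I_n) (F : 'I_n -> R -> R) (L : 'I_n -> R) a :
  (forall i, P i -> is_derive a 1 (F i) (L i)) -> (forall i, P i -> F i a != 0) ->
  is_derive a 1 (fun h => \prod_(i < n | P i) F i h)
    ((\prod_(i < n | P i) F i a) * \sum_(i < n | P i) L i / F i a).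
Proof.
move=> dF F0.
pose G i h := if P i then F i h else 1.
have dG i : is_derive a 1 (G i) (if P i then L i else 0).
  by rewrite /G; case: (P i) (dF i) => [/(_ isT) //|_]; exact: is_derive_cst.
rewrite (_ : (fun h => _) = fun h => \prod_(i < n) G i h); last first.
  by apply/funext => h; rewrite big_mkcond.
apply: (is_derive_eq (is_derive_prod dG)).
rewrite big_distrr [RHS]big_mkcond /=; apply: eq_bigr => i _.
case: ifP => Pi; last by rewrite mul0r.
rewrite (big_mkcond (fun k => k != i)) [in RHS](bigD1 i) //= big_mkcond [in RHS]big_mkcond /=.
have -> : \prod_(k < n) (if k != i then G k a else 1) =
           \prod_(k < n) (if P k && (k != i) then F k a else 1).
  by apply: eq_bigr => k _; rewrite /G; case: (P k); case: (k != i).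
by field; exact: F0.
Qed.

Lemma is_derive_det n (M : R -> 'M[R]_n) (D : 'I_n -> 'I_n -> R) a :
  (forall i j, is_derive a 1 (fun h => M h i j) (D i j)) ->
  is_derive a 1 (fun h => \det (M h)) (\sum_i \sum_j D i j * cofactor (M a) i j).
Proof.
move=> dM.
have dterm (s : 'S_n) : is_derive a 1 (fun h => (-1) ^+ s * \prod_i M h i (s i))
    ((-1) ^+ s * \sum_i D i (s i) * \prod_(k | k != i) M a k (s k)).
  exact: (is_deriveZ ((-1) ^+ s) (is_derive_prod (fun i => dM i (s i)))).
apply: (is_derive_eq (is_derive_big_sum (index_enum _) (P := xpredT) (fun s _ => dterm s))).
have row_expansion i : \sum_j D i j * cofactor (M a) i j =
    \sum_(s : 'S_n) (-1) ^+ s * (D i (s i) * \prod_(k | k != i) M a k (s k)).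
  rewrite [RHS](partition_big (fun s : 'S_n => s i) predT) //=.
  apply: eq_bigr => j _; rewrite expand_cofactor big_distrr /=.
  apply: eq_bigr => s /eqP <-; rewrite mulrCA; congr (_ * (_ * _)).
  by apply: eq_bigl => k; rewrite eq_sym.
rewrite (eq_bigr _ (fun i _ => row_expansion i)) exchange_big /=.
by apply: eq_bigr => s _; rewrite big_distrr.
Qed.

(* For [f a < 0] both sides vanish: [sqrt] is [0] near [a], and so is [df / 0]. *)
Lemma is_derive_sqrt_comp f a df : f a != 0 -> is_derive a 1 f df ->
  is_derive a 1 (fun h => Num.sqrt (f h)) (df / (2 * Num.sqrt (f a))).
Proof.
move=> fa0 df_a; have [fa_lt0|fa_gt0|] := ltgtP (f a) 0; last by move/eqP: fa0.
- rewrite ltr0_sqrtr // mulr0 invr0 mulr0.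
  apply: (near_eq_is_derive _ (is_derive_cst (0 : R) a 1)).
  have [/derivable1_diffP/differentiable_continuous f_cont _] := df_a.
  near=> h; rewrite ltr0_sqrtr //; near: h; exact: (cvgr_lt _ f_cont).
- by rewrite mulrC; exact: is_derive1_comp (is_derive1_sqrt fa_gt0) df_a.
Unshelve. all: by end_near. Qed.
End RealDerive.

Section ComplexDerive.
Variable R : realType.
Implicit Types (f g : R -> R[i]) (a : R).

Let ReD (u v : R[i]) : complex.Re (u + v) = complex.Re u + complex.Re v.
Proof. by case: u => ? ?; case: v => ? ?. Qed.

Let ImD (u v : R[i]) : complex.Im (u + v) = complex.Im u + complex.Im v.
Proof. by case: u => ? ?; case: v => ? ?. Qed.

Let ReM (u v : R[i]) :
  complex.Re (u * v) = complex.Re u * complex.Re v - complex.Im u * complex.Im v.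
Proof. by case: u => ? ?; case: v => ? ?. Qed.

Let ImM (u v : R[i]) :
  complex.Im (u * v) = complex.Re u * complex.Im v + complex.Im u * complex.Re v.
Proof. by case: u => ? ?; case: v => ? ?. Qed.

Lemma cplx_derive_eq f a (l l' : R[i]) :
  cplx_derive f a l -> l = l' -> cplx_derive f a l'.
Proof. by move=> ? <-. Qed.

Lemma cplx_derive_cst (w : R[i]) a : cplx_derive (fun=> w) a 0.
Proof. by split; exact: is_derive_cst. Qed.

Lemma cplx_deriveD f g a lf lg : cplx_derive f a lf -> cplx_derive g a lg ->
  cplx_derive (f + g) a (lf + lg).
Proof.
move=> [dRf dIf] [dRg dIg]; split.
- by under [fun h => _]funext do rewrite ReD; rewrite ReD; exact: is_deriveD.
- by under [fun h => _]funext do rewrite ImD; rewrite ImD; exact: is_deriveD.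
Qed.

Lemma cplx_deriveM f g a lf lg : cplx_derive f a lf -> cplx_derive g a lg ->
  cplx_derive (fun h => f h * g h) a (lf * g a + f a * lg).
Proof.
move=> [dRf dIf] [dRg dIg]; split.
- under [fun h => _]funext do rewrite ReM.
  apply: is_derive_eq (is_deriveB (is_deriveM dRf dRg) (is_deriveM dIf dIg)) _.
  by rewrite /GRing.scale /= ReD !ReM; ring.
- under [fun h => _]funext do rewrite ImM.
  apply: is_derive_eq (is_deriveD (is_deriveM dRf dIg) (is_deriveM dIf dRg)) _.
  by rewrite /GRing.scale /= ImD !ImM; ring.
Qed.

Lemma cplx_derive_sum (I : Type) (r : seq I) (P : pred I)
    (F : I -> R -> R[i]) (L : I -> R[i]) a :
  (forall i, P i -> cplx_derive (F i) a (L i)) ->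
  cplx_derive (fun h => \sum_(i <- r | P i) F i h) a (\sum_(i <- r | P i) L i).
Proof.
move=> dF; rewrite -fct_sumE.
elim/big_rec2: _ => [|i dg g Pi dg_g]; first exact: cplx_derive_cst.
exact: cplx_deriveD (dF i Pi) dg_g.
Qed.

Lemma cplx_derive_real (u : R -> R) a du : is_derive a 1 u du ->
  cplx_derive (fun h => (u h)%:C) a du%:C.
Proof. by split => //=; exact: is_derive_cst. Qed.

Lemma cplx_derive_cexpi (u : R -> R) a du : is_derive a 1 u du ->
  cplx_derive (fun h => cexpi (u h)) a ('i%C * du%:C * cexpi (u a)).
Proof.
move=> du_a; split => /=.
- by apply: is_derive_eq (is_derive1_comp (is_derive_cos _) du_a) _; ring.
- by apply: is_derive_eq (is_derive1_comp (is_derive_sin _) du_a) _; ring.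
Qed.
End ComplexDerive.

Section ExponentialTerm.
Variables (R : realType) (d j : nat) (k : 'rV[R]_d).
Variables (y : R -> 'I_j.+1 -> 'rV[R]_d) (a : R) (e : 'I_j.+1 -> R).
Local Notation σ := (sigma k (y a)).
Hypothesis σ_inj : forall s t, s != t -> σ s != σ t.
Hypothesis dσ : forall l, is_derive a 1 (fun h => sigma k (y h) l) (e l).

Lemma cplx_derive_S_t t : cplx_derive (fun h => S_t k (y h) t) a
  (S_t k (y a) t *
   (- 'i%C * (e t)%:C - (\sum_(l < j.+1 | l != t) (e t - e l) / (σ t - σ l))%:C)).
Proof.
pose P h := \prod_(l < j.+1 | l != t) (sigma k (y h) t - sigma k (y h) l).
have σ_sub_neq0 l : l != t -> σ t - σ l != 0 by rewrite subr_eq0 eq_sym => /σ_inj.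
have P_neq0 : P a != 0 by apply/prodf_neq0 => l; exact: σ_sub_neq0.
have dP : is_derive a 1 P (P a * \sum_(l < j.+1 | l != t) (e t - e l) / (σ t - σ l)).
  exact: is_derive_prod_nonzero (fun l _ => is_deriveB (dσ t) (dσ l)) σ_sub_neq0.
have := cplx_deriveM (cplx_derive_cexpi (is_deriveN (dσ t)))
  (cplx_derive_real (is_deriveV P_neq0 dP)).
under [fun h => _]funext do rewrite fmorphV -/(S_t k (y _) t).
move/cplx_derive_eq; apply; rewrite /S_t -/(P a) /=.
set st := \sum_(l < j.+1 | l != t) _.
have -> : - P a ^- 2 *: (P a * st) = - ((P a)^-1 * st) by rewrite /GRing.scale /=; field.
rewrite !(rmorphN, rmorphM, fmorphV) /=.
move: (cexpi _) ((P a)%:C^-1) (st%:C) ((e t)%:C) => E Pinv S et; ring.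
Qed.
End ExponentialTerm.

Lemma sum_weighted_sqr_diff (R : comRingType) n (w z : 'I_n -> R) :
  \sum_s \sum_t w s * w t * (z t - z s) ^+ 2 =
  2 * ((\sum_t w t) * (\sum_t w t * z t ^+ 2) - (\sum_t w t * z t) ^+ 2).
Proof.
have expand s t : w s * w t * (z t - z s) ^+ 2 =
    w s * (w t * z t ^+ 2) + w t * (w s * z s ^+ 2) - 2 * ((w s * z s) * (w t * z t)).
  by ring.
under eq_bigr do under eq_bigr do rewrite expand.
under eq_bigr do rewrite sumrB big_split /=.
rewrite sumrB big_split /= [X in _ + X - _]exchange_big /= -!big_distrlr /=.
under [X in _ - X]eq_bigr do rewrite -big_distrr /=.
by rewrite -big_distrr -big_distrlr /=; ring.
Qed.

Section CayleyMenger.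
Variables (R : realType) (d j : nat).
Implicit Types (x : 'I_j.+1 -> 'rV[R]_d).

Lemma CMmx00 x : CMmx x ord0 ord0 = 0.
Proof. by rewrite mxE unlift_none. Qed.

Lemma CMmx0l x t : CMmx x ord0 (lift ord0 t) = 1.
Proof. by rewrite mxE unlift_none liftK. Qed.

Lemma CMmxl0 x t : CMmx x (lift ord0 t) ord0 = 1.
Proof. by rewrite mxE unlift_none liftK. Qed.

Lemma CMmxll x s t : CMmx x (lift ord0 s) (lift ord0 t) = sqdist (x s) (x t).
Proof. by rewrite mxE !liftK. Qed.

Lemma tr_CMmx x : (CMmx x)^T = CMmx x.
Proof.
apply/matrixP => a b; rewrite mxE.
case: (unliftP ord0 a) => [s ->|->]; case: (unliftP ord0 b) => [t ->|->];
  rewrite ?CMmxll ?CMmxl0 ?CMmx0l ?CMmx00 //.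
by apply: eq_bigr => c _; rewrite -sqrrN opprB.
Qed.

Lemma affinely_independent_weights_eq0 x (w : 'I_j.+1 -> R) :
  affinely_independent x -> \sum_t w t = 0 ->
  (forall c, \sum_t w t * x t 0 c = 0) -> forall t, w t = 0.
Proof.
move=> x_ai w_sum0 wx0.
pose w' := \row_(t < j) w (lift ord0 t).
have : w' *m \matrix_(t < j, c < d) (x (lift ord0 t) 0 c - x ord0 0 c) = 0.
  apply/rowP => c; rewrite !mxE.
  transitivity (\sum_t w t * (x t 0 c - x ord0 0 c)).
    by rewrite [RHS]big_ord_recl subrr mulr0 add0r; apply: eq_bigr => t _; rewrite !mxE.
  under eq_bigr do rewrite mulrBr.
  by rewrite sumrB wx0 -big_distrl /= w_sum0 mul0r subrr.
move/eqP; rewrite mulmx_free_eq0 // => /eqP/rowP w'0.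
have w_lift t : w (lift ord0 t) = 0 by have := w'0 t; rewrite !mxE.
move=> t; case: (unliftP ord0 t) => [t' ->|->]; first exact: w_lift.
by move: w_sum0; rewrite big_ord_recl big1 ?addr0 // => t' _; rewrite w_lift.
Qed.

Lemma CMmx_det_neq0 x : affinely_independent x -> \det (CMmx x) != 0.
Proof.
move=> x_ai; apply/det0P => -[v v_neq0 /rowP vM0].
pose w (t : 'I_j.+1) := v 0 (lift ord0 t).
have col0 b : \sum_a v 0 a * CMmx x a b = 0 by have := vM0 b; rewrite !mxE.
have w_sum0 : \sum_t w t = 0.
  rewrite -[RHS](col0 ord0) [RHS]big_ord_recl CMmx00 mulr0 add0r.
  by apply: eq_bigr => t _; rewrite CMmxl0 mulr1.
have w_dist s : v 0 ord0 + \sum_t w t * sqdist (x t) (x s) = 0.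
  rewrite -[RHS](col0 (lift ord0 s)) [RHS]big_ord_recl CMmx0l mulr1.
  by congr (_ + _); apply: eq_bigr => t _; rewrite CMmxll.
have w_quad0 : \sum_s \sum_t w s * w t * sqdist (x t) (x s) = 0.
  have : \sum_s w s * (v 0 ord0 + \sum_t w t * sqdist (x t) (x s)) = 0.
    by rewrite big1 // => s _; rewrite w_dist mulr0.
  under eq_bigr do rewrite mulrDr big_distrr.
  rewrite big_split /= -big_distrl /= w_sum0 mul0r add0r => wv0; rewrite -[RHS]wv0.
  by apply: eq_bigr => s _; apply: eq_bigr => t _; rewrite mulrA.
have centroid0 c : \sum_t w t * x t 0 c = 0.
  have : \sum_c (\sum_t w t * x t 0 c) ^+ 2 = 0.
    move: w_quad0; under eq_bigr do under eq_bigr do rewrite /sqdist big_distrr.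
    under eq_bigr do rewrite exchange_big.
    rewrite exchange_big /=.
    under eq_bigr do rewrite /= sum_weighted_sqr_diff w_sum0 mul0r sub0r.
    by rewrite -big_distrr /= sumrN mulrN => /eqP; rewrite oppr_eq0 mulf_eq0 pnatr_eq0 => /eqP.
  move/eqP; rewrite psumr_eq0 => [/allP/(_ c (mem_index_enum c))|c' _]; last exact: sqr_ge0.
  by rewrite sqrf_eq0 => /eqP.
have w0 := affinely_independent_weights_eq0 x_ai w_sum0 centroid0.
have v00 : v 0 ord0 = 0 by rewrite -(w_dist ord0) big1 ?addr0 // => t _; rewrite w0 mul0r.
move/eqP: v_neq0; apply; apply/rowP => a; rewrite mxE.
by case: (unliftP ord0 a) => [t ->|->]; [exact: w0 | exact: v00].
Qed.
End CayleyMenger.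

Section Perturbation.
Variables (R : realType) (d j : nat).
Variables (x : 'I_j.+1 -> 'rV[R]_d) (p : 'I_j.+1) (c : 'I_d).

Local Notation xh h := (xpert x p c h).
Local Notation δ t := ((t == p)%:R : R).

Lemma xpert0 : xh 0 = x.
Proof. by apply/funext => t; rewrite /xpert scale0r addr0; case: eqP. Qed.

Lemma xpertE h t c' : xh h t 0 c' = x t 0 c' + h * δ t * (c' == c)%:R.
Proof.
rewrite /xpert; case: eqP => _; rewrite ?mxE ?mulr1 //.
by rewrite mulr0 mul0r addr0.
Qed.

Let sum_coord (f : 'I_d -> R) : \sum_c' f c' * (c' == c)%:R = f c.
Proof.
rewrite (bigD1 c) //= eqxx mulr1 big1 ?addr0 // => c' /negbTE ->.
by rewrite mulr0.
Qed.

Lemma sigma_xpert k h t : sigma k (xh h) t = sigma k x t + h * (δ t * k 0 c).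
Proof.
rewrite /sigma /dotv; under eq_bigr do rewrite xpertE mulrDr.
rewrite big_split /=; congr (_ + _).
rewrite -[RHS](sum_coord (fun c' => h * (δ t * k 0 c'))).
by apply: eq_bigr => c' _; ring.
Qed.

Lemma sqdist_xpert h s t :
  sqdist (xh h s) (xh h t) = sqdist (x s) (x t)
    + h * (2 * (x s 0 c - x t 0 c) * (δ s - δ t)) + h ^+ 2 * (δ s - δ t) ^+ 2.
Proof.
rewrite /sqdist; under eq_bigr do rewrite !xpertE.
transitivity (\sum_c' ((x s 0 c' - x t 0 c') ^+ 2
   + h * (2 * (x s 0 c' - x t 0 c') * (δ s - δ t) * (c' == c)%:R)
   + h ^+ 2 * ((δ s - δ t) ^+ 2 * (c' == c)%:R))).
  by apply: eq_bigr => c' _; case: (c' == c) => /=; ring.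
have sum_delta : \sum_(c' < d) (c' == c)%:R = 1 :> R.
  by rewrite (bigD1 c) //= eqxx big1 ?addr0 // => c' /negbTE ->.
by rewrite !big_split /= -!big_distrr /= !sum_coord sum_delta mulr1.
Qed.

Let is_derive_affine (u v : R) : is_derive (0 : R) 1 (fun h => u + h * v) v.
Proof.
have := is_deriveD (is_derive_cst u (0 : R) (1 : R))
  (is_deriveM (@is_derive_id R R 0 1) (is_derive_cst v (0 : R) (1 : R))).
by move/is_derive_eq; apply; rewrite /GRing.scale /=; ring.
Qed.

Let is_derive_quadratic (u v w : R) :
  is_derive (0 : R) 1 (fun h => u + h * v + h ^+ 2 * w) v.
Proof.
have := is_deriveD (is_derive_affine u v)
  (is_deriveM (is_deriveX 2 (@is_derive_id R R 0 1)) (is_derive_cst w (0 : R) (1 : R))).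
by move/is_derive_eq; apply; rewrite /GRing.scale /=; ring.
Qed.

Lemma is_derive_sigma_xpert k t :
  is_derive (0 : R) 1 (fun h => sigma k (xh h) t) (δ t * k 0 c).
Proof. by under [fun h => _]funext do rewrite sigma_xpert; exact: is_derive_affine. Qed.

Definition adj_sum : R :=
  \sum_(m < j.+1 | m != p) Aadj x p m * (2 * (x p 0 c - x m 0 c)).

Let dCM (a b : 'I_j.+2) : R :=
  match unlift ord0 a, unlift ord0 b with
  | Some s, Some t => 2 * (x s 0 c - x t 0 c) * (δ s - δ t)
  | _, _ => 0
  end.

Let is_derive_CMmx_xpert a b :
  is_derive (0 : R) 1 (fun h => CMmx (xh h) a b) (dCM a b).
Proof.
rewrite /dCM; case: (unliftP ord0 a) => [s ->|->]; case: (unliftP ord0 b) => [t ->|->];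
  rewrite ?liftK ?unlift_none.
- by under [fun h => _]funext do rewrite CMmxll sqdist_xpert; exact: is_derive_quadratic.
- by under [fun h => _]funext do rewrite CMmxl0; exact: is_derive_cst.
- by under [fun h => _]funext do rewrite CMmx0l; exact: is_derive_cst.
- by under [fun h => _]funext do rewrite CMmx00; exact: is_derive_cst.
Qed.

Lemma is_derive_det_CMmx_xpert :
  is_derive (0 : R) 1 (fun h => \det (CMmx (xh h))) (2 * adj_sum).
Proof.
apply: (is_derive_eq (is_derive_det is_derive_CMmx_xpert)); rewrite xpert0.
pose C s t := cofactor (CMmx x) (lift ord0 s) (lift ord0 t).
pose D s t := 2 * (x s 0 c - x t 0 c) * C s t.
have C_sym s t : C s t = C t s by rewrite /C -{1}tr_CMmx cofactor_tr.
have pick (g : 'I_j.+1 -> R) : \sum_s δ s * g s = g p.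
  by rewrite (bigD1 p) //= eqxx mul1r big1 ?addr0 // => s /negbTE ->; rewrite mul0r.
rewrite big_ord_recl big1 ?add0r => [|b _]; last by rewrite /dCM unlift_none mul0r.
under eq_bigr do rewrite big_ord_recl {1}/dCM liftK unlift_none mul0r add0r.
transitivity (\sum_s δ s * \sum_t D s t - \sum_t δ t * \sum_s D s t).
  under [X in _ - X]eq_bigr do rewrite big_distrr.
  rewrite [X in _ - X]exchange_big -sumrB /=; apply: eq_bigr => s _.
  rewrite big_distrr -sumrB; apply: eq_bigr => t _.
  by rewrite /dCM !liftK /D /C /=; ring.
rewrite !pick -sumrB.
transitivity (2 * \sum_t D p t).
  by rewrite big_distrr; apply: eq_bigr => t _; rewrite /D C_sym /=; ring.
congr (_ * _); rewrite /adj_sum [LHS](bigD1 p) //= /D subrr mulr0 mul0r add0r.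
by apply: eq_bigr => m _; rewrite (C_sym p m) /Aadj mxE mulrC.
Qed.

Lemma is_derive_gammaCM_xpert : affinely_independent x ->
  is_derive (0 : R) 1 (fun h => gammaCM (xh h))
    ((-1) ^+ j.+1 / 2 ^+ j / gammaCM x * adj_sum).
Proof.
move=> x_ai; pose K : R := (-1) ^+ j.+1 / 2 ^+ j.
have gammaE (y : 'I_j.+1 -> 'rV[R]_d) : gammaCM y = Num.sqrt (K * \det (CMmx y)).
  by rewrite /gammaCM /K mulrAC.
under [fun h => _]funext do rewrite gammaE.
have K_neq0 : K != 0 by rewrite mulf_neq0 ?invr_eq0 ?expf_neq0 ?oppr_eq0 ?pnatr_eq0.
have := is_derive_sqrt_comp _ (is_deriveZ K is_derive_det_CMmx_xpert).
rewrite /= xpert0 mulf_neq0 ?CMmx_det_neq0 // => /(_ isT) /is_derive_eq; apply.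
rewrite gammaE invfM /GRing.scale /=; set g := (Num.sqrt _)^-1.
by rewrite /K; field; rewrite ?expf_neq0 ?pnatr_eq0.
Qed.
End Perturbation.

Section ExponentialSumPerturbation.
Variables (R : realType) (d j : nat) (x : 'I_j.+1 -> 'rV[R]_d) (k : 'rV[R]_d).
Variables (p : 'I_j.+1) (c : 'I_d).
Local Notation σ := (sigma k x).
Local Notation δ t := ((t == p)%:R : R).
Hypothesis σ_inj : forall s t, s != t -> σ s != σ t.

Lemma cplx_derive_S_sum_xpert : cplx_derive (fun h => S_sum k (xpert x p c h)) 0
  ((k 0 c)%:C * (- 'i%C * S_t k x p +
     \sum_(t < j.+1 | t != p) (S_t k x t + S_t k x p) / (σ t - σ p)%:C)).
Proof.
have dS := cplx_derive_S_t (y := xpert x p c) (a := 0).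
rewrite xpert0 in dS; have {}dS t := dS _ _ σ_inj (is_derive_sigma_xpert x p c k) t.
apply: (cplx_derive_eq (cplx_derive_sum (index_enum _) (P := xpredT) (fun t _ => dS t))).
have rate_p : \sum_(l < j.+1 | l != p) (δ p * k 0 c - δ l * k 0 c) / (σ p - σ l) =
    - \sum_(l < j.+1 | l != p) k 0 c / (σ l - σ p).
  rewrite -sumrN; apply: eq_bigr => l /negbTE lp.
  by rewrite eqxx lp -[σ p - σ l]opprB invrN /=; ring.
have rate_t t : t != p ->
    \sum_(l < j.+1 | l != t) (δ t * k 0 c - δ l * k 0 c) / (σ t - σ l) =
    - (k 0 c / (σ t - σ p)).
  move=> tp; have pt : p != t by rewrite eq_sym.
  rewrite (bigD1 p pt) /= big1 ?addr0 => [|l /andP[_ /negbTE lp]].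
    by rewrite eqxx (negbTE tp) /=; ring.
  by rewrite (negbTE tp) lp /=; ring.
rewrite (bigD1 p) //= rate_p eqxx mul1r.
under eq_bigr => t tp do rewrite rate_t // (negbTE tp) mul0r.
rewrite rmorphN opprK rmorph_sum mulrDr big_distrr /= mulrDr -addrA; congr (_ + _).
  by move: (S_t k x p) ((k 0 c)%:C) => Sp kc; ring.
rewrite big_distrr -big_split /=; apply: eq_bigr => t _.
rewrite !(rmorphN, rmorphM, fmorphV, rmorph0) /=.
by move: (S_t k x p) (S_t k x t) ((k 0 c)%:C) ((σ t - σ p)%:C^-1) => Sp St kc inv; ring.
Qed.
End ExponentialSumPerturbation.

Theorem proposition2 (R : realType) (d j : nat) :
  (1 <= j)%N -> (j <= d)%N ->
  forall (x : 'I_j.+1 -> 'rV[R]_d) (rho : R) (k : 'rV[R]_d),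
  affinely_independent x ->
  (forall s t : 'I_j.+1, s != t -> sigma k x s != sigma k x t) ->
  forall (p : 'I_j.+1) (c : 'I_d),
  cplx_derive (fun h : R => Fhat rho k (xpert x p c h)) 0 (grad_rhs rho k x p c).
Proof.
move=> _ _ x rho k x_ai σ_inj p c.
have dgamma := cplx_derive_real (is_derive_gammaCM_xpert p c x_ai).
have dS := cplx_derive_S_sum_xpert p c σ_inj.
have dF := cplx_deriveM (cplx_deriveM (cplx_derive_cst (rho%:C * 'i%C ^+ j) 0) dgamma) dS.
apply: (cplx_derive_eq dF).
rewrite /= xpert0 /grad_rhs /Lambda /GammaCM -/(adj_sum x p c).
set W := \sum_(t < j.+1 | t != p) _.
rewrite rmorphM /=.
move: W (S_t k x p) (S_sum k x) ((gammaCM x)%:C) (((-1) ^+ j.+1 / 2 ^+ j / gammaCM x)%:C)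
  ((adj_sum x p c)%:C) ((k 0 c)%:C) (rho%:C * 'i%C ^+ j) => W Sp S g G A kc r.
ring.
Qed.
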